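(* Let $M\in\mathrm{M}_n(\mathbb{K})$ be a cyclic matrix with minimal polynomial $f=f_1^{m_1}\cdots f_s^{m_s}$, where $f_1,\dots,f_s\in\mathbb{K}[x]$ are pairwise distinct monic irreducible polynomials and $m_i\ge1$. Then every nonzero $M$-cyclic code $\mathcal{C}\subseteq\mathbb{L}^n$ satisfies $M_1(\mathcal{C})=1$ if and only if $f_1,\dots,f_s$ are all irreducible in $\mathbb{L}[x]$.
   Context: Let $\mathbb{L}/\mathbb{K}$ be a field extension of finite degree $m\ge n$. Vectors are row vectors. For $c=(c_1,\dots,c_n)\in\mathbb{L}^n$, $\mathrm{wt}_R(c)=\dim_{\mathbb{K}}\mathrm{Span}_{\mathbb{K}}(c_1,\dots,c_n)$, and for a nonzero linear code $\mathcal{C}\subseteq\mathbb{L}^n$ (an $\mathbb{L}$-subspace), $M_1(\mathcal{C})=\min\{\mathrm{wt}_R(c):0\neq c\in\mathcal{C}\}$. A matrix $M\in\mathrm{M}_n(\mathbb{K})$ is cyclic if there is $v\in\mathbb{K}^n$ with $(v,vM^t,\dots,v(M^t)^{n-1})$ a basis of $\mathbb{K}^n$. An $M$-cyclic code is an $\mathbb{L}$-subspace $\mathcal{C}\subseteq\mathbb{L}^n$ with $cM^t\in\mathcal{C}$ for all $c\in\mathcal{C}$, where $M$ is cyclic. *)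

From HB Require Import structures.
From mathcomp Require Import all_boot all_order all_algebra all_field.
Set Implicit Arguments. Unset Strict Implicit. Unset Printing Implicit Defensive.
Import GRing.Theory.
Local Open Scope ring_scope.

Definition cyclic_mx (K : fieldType) (n : nat) (M : 'M[K]_n) : Prop :=
  exists v : 'rV[K]_n,
    (\matrix_(i < n) (v *m (M^T) ^+ i)) \in unitmx.

Definition rank_wt (K : fieldType) (L : fieldExtType K) (n : nat)
    (c : 'rV[L]_n) : nat :=
  \dim (<<[seq c ord0 j | j <- enum 'I_n]>>%VS : {vspace L}).

Definition mx_invariant_code (K : fieldType) (L : fieldExtType K) (n : nat)
    (M : 'M[K]_n) (C : {vspace 'rV[L]_n}) : Prop :=
  forall c, c \in C -> c *m map_mx (in_alg L) M^T \in C.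

Definition M1_eq (K : fieldType) (L : fieldExtType K) (n : nat)
    (C : {vspace 'rV[L]_n}) (d : nat) : Prop :=
  (exists2 c, (c \in C) && (c != 0) & rank_wt c = d) /\
  (forall c, c \in C -> c != 0 -> (d <= rank_wt c)%N).

From HB Require Import structures.
From mathcomp Require Import all_boot all_order all_algebra all_field.
Set Implicit Arguments.
Unset Strict Implicit.
Unset Printing Implicit Defensive.
Import GRing.Theory.
Local Open Scope ring_scope.

(* Write A = M^T and let v be a cyclic vector of A, so that p |-> v p(A)
   identifies L[x]/(f) with L^n and the M-invariant codes with its
   L[x]-submodules.  If every f_i stays irreducible over L, a nonzero invariant
   code contains a nonzero vector killed by some f_i(A); as f_i is irreducible,
   the kernel of f_i(A) is the simple module generated by v (f/f_i)(A), so the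
   code contains this vector, which is defined over K and has rank weight 1.
   Conversely, a proper factor q over L of some f_i yields the invariant code
   ker q(A).  A codeword of rank weight 1 is lam w with w in K^n and q(A) w = 0;
   applying to the coefficients of q a K-linear form L -> K that does not kill
   its leading coefficient gives a polynomial over K, of degree smaller than
   f_i, which kills w together with f_i, hence w = 0. *)

Definition krylov_mx (R : pzSemiRingType) (n : nat) (u : 'rV[R]_n) (A : 'M[R]_n) : 'M[R]_n :=
  \matrix_(i < n) (u *m A ^+ i).

Section HornerMx.
Variables (R : comNzSemiRingType) (n : nat) (A : 'M[R]_n.+1).

Lemma horner_mx_coef_wide (p : {poly R}) m :
  (size p <= m)%N -> horner_mx A p = \sum_(i < m) p`_i *: A ^+ i.
Proof.
move=> le_p_m; rewrite [LHS](horner_coef_wide _ (leq_trans (size_poly _ _) le_p_m)).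
by apply: eq_bigr => i _; rewrite coef_map /= -mulmxE mul_scalar_mx.
Qed.

Lemma horner_mx_trmx (p : {poly R}) : horner_mx A^T p = (horner_mx A p)^T.
Proof.
elim/poly_ind: p => [|p c IHp]; first by rewrite !rmorph0 trmx0.
rewrite !rmorphD !rmorphM /= !horner_mx_X !horner_mx_C linearD /= tr_scalar_mx IHp.
by rewrite -!mulmxE -trmx_mul; congr (_^T + _); apply: comm_mx_horner.
Qed.

Lemma mul_horner_krylov_mx (u : 'rV[R]_n.+1) (p : {poly R}) :
  (size p <= n.+1)%N -> u *m horner_mx A p = poly_rV p *m krylov_mx u A.
Proof.
move=> le_p_n; rewrite (horner_mx_coef_wide le_p_n) mulmx_sumr mulmx_sum_row.
by apply: eq_bigr => i _; rewrite -scalemxAr rowK mxE.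
Qed.

Lemma horner_mx_expr_factor (c : 'rV[R]_n.+1) (g : {poly R}) k :
  c != 0 -> c *m horner_mx A (g ^+ k) = 0 ->
  exists2 p, c *m horner_mx A p != 0 & c *m horner_mx A (p * g) = 0.
Proof.
move=> c_neq0; elim: k => [|k IHk].
  by rewrite expr0 rmorph1 mulmx1 => c0; rewrite c0 eqxx in c_neq0.
have [/IHk //|cgk_neq0 cgSk0] := eqVneq (c *m horner_mx A (g ^+ k)) 0.
by exists (g ^+ k); rewrite // -exprSr.
Qed.

Lemma horner_mx_prod_factor (I : Type) (r : seq I) (g : I -> {poly R}) (mu : I -> nat)
    (c : 'rV[R]_n.+1) :
  c != 0 -> c *m horner_mx A (\prod_(i <- r) g i ^+ mu i) = 0 ->
  exists i, exists2 p, c *m horner_mx A p != 0 & c *m horner_mx A (p * g i) = 0.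
Proof.
elim: r c => [|i r IHr] c c_neq0.
  by rewrite big_nil rmorph1 mulmx1 => c0; rewrite c0 eqxx in c_neq0.
rewrite big_cons rmorphM /= -mulmxE mulmxA.
have [cg0 _|cg_neq0] := eqVneq (c *m horner_mx A (g i ^+ mu i)) 0.
  by have [p] := horner_mx_expr_factor c_neq0 cg0; exists i, p.
move=> /(IHr _ cg_neq0) [j [p cgp_neq0 cgpg0]].
by exists j, (g i ^+ mu i * p); rewrite -?mulrA rmorphM /= -mulmxE mulmxA.
Qed.

Lemma map_krylov_mx (S : comNzSemiRingType) (f : {rmorphism R -> S}) (u : 'rV[R]_n.+1) :
  map_mx f (krylov_mx u A) = krylov_mx (map_mx f u) (map_mx f A).
Proof. by apply/row_matrixP => i; rewrite -map_row !rowK map_mxM rmorphXn. Qed.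

End HornerMx.

Section CyclicVector.
Variables (F : fieldType) (n : nat) (A : 'M[F]_n.+1).

Lemma mxminpoly_trmx : mxminpoly A^T = mxminpoly A.
Proof.
apply/eqP; rewrite -eqp_monic ?mxminpoly_monic //; apply/andP; split; apply: mxminpoly_min.
  by rewrite horner_mx_trmx mx_root_minpoly trmx0.
by rewrite -[X in horner_mx X]trmxK horner_mx_trmx mx_root_minpoly trmx0.
Qed.

Lemma memv_mulmx_horner (C : {vspace 'rV[F]_n.+1}) :
  (forall c, c \in C -> c *m A \in C) ->
  forall p c, c \in C -> c *m horner_mx A p \in C.
Proof.
move=> stableC p c cC; have powC k : c *m A ^+ k \in C.
  by elim: k => [|k IHk]; rewrite ?expr0 ?mulmx1 // exprSr -mulmxE mulmxA stableC.
rewrite (horner_mx_coef_wide _ (leqnn _)) mulmx_sumr.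
by apply: memv_suml => i _; rewrite -scalemxAr memvZ.
Qed.

Lemma horner_mx_coprime (p q : {poly F}) (z : 'rV[F]_n.+1) :
  coprimep p q -> z *m horner_mx A p = 0 -> exists y, z = z *m horner_mx A (q * y).
Proof.
move=> /Bezout_eq1_coprimepP [[a b] /= Bezout] zp0; exists b.
rewrite -[z in LHS]mulmx1 -[1%:M](rmorph1 (horner_mx A)) -Bezout rmorphD /= mulmxDr.
by rewrite mulrC rmorphM /= -mulmxE mulmxA zp0 mul0mx add0r mulrC.
Qed.

Definition horner_ker (q : {poly F}) : {vspace 'rV[F]_n.+1} :=
  lker (linfun (mulmxr (horner_mx A q))).

Lemma mem_horner_ker q c : (c \in horner_ker q) = (c *m horner_mx A q == 0).
Proof. by rewrite memv_ker lfunE. Qed.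

Lemma horner_ker_stable q c : c \in horner_ker q -> c *m A \in horner_ker q.
Proof.
rewrite !mem_horner_ker -mulmxA (comm_mx_horner _ (comm_mx_refl A)).
by rewrite mulmxA => /eqP->; rewrite mul0mx.
Qed.

Variable u : 'rV[F]_n.+1.
Hypothesis u_cyclic : krylov_mx u A \in unitmx.

Lemma horner_krylov_eq0 p : (u *m horner_mx A p == 0) = (mxminpoly A %| p).
Proof.
apply/eqP/idP => [up0|]; last by rewrite dvd_mxminpoly => /eqP->; rewrite mulmx0.
have le_r_n : (size (p %% mxminpoly A)%R <= n.+1)%N.
  rewrite (leq_trans (size_mod_mxminpoly _ _)) // -ltnS -size_mxminpoly -(size_char_poly A).
  by rewrite dvdp_leq ?mxminpoly_dvd_char // monic_neq0 ?char_poly_monic.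
have r_krylov0 : poly_rV (p %% mxminpoly A) *m krylov_mx u A = 0.
  rewrite -mul_horner_krylov_mx // -up0 [in RHS](divp_eq p (mxminpoly A)).
  by rewrite rmorphD rmorphM /= mx_root_minpoly mulr0 add0r.
apply/modp_eq0P; rewrite -(poly_rV_K le_r_n) -[poly_rV _](mulmxK u_cyclic).
by rewrite r_krylov0 mul0mx linear0.
Qed.

Lemma krylov_horner_surj y : exists p, y = u *m horner_mx A p.
Proof.
exists (rVpoly (y *m invmx (krylov_mx u A))).
by rewrite mul_horner_krylov_mx ?size_poly // rVpolyK mulmxKV.
Qed.

Lemma horner_krylov_divp_neq0 g :
  g %| mxminpoly A -> (1 < size g)%N -> u *m horner_mx A (mxminpoly A %/ g) != 0.
Proof.
move=> g_dvd g_gt1; rewrite horner_krylov_eq0.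
have g_neq0 : g != 0 by rewrite -size_poly_gt0 ltnW.
have m_neq0 : mxminpoly A != 0 by rewrite monic_neq0 ?mxminpoly_monic.
have q_neq0 : mxminpoly A %/ g != 0.
  by apply: contraNneq m_neq0 => q0; rewrite -(divpK g_dvd) q0 mul0r.
have m_gt0 : (0 < size (mxminpoly A))%N by rewrite size_poly_gt0.
apply/negP => /(dvdp_leq q_neq0).
by rewrite size_divp // leqNgt ltn_subrL m_gt0 andbT -subn1 subn_gt0 g_gt1.
Qed.

Lemma stable_factor_quotient (C : {vspace 'rV[F]_n.+1}) (g : {poly F})
    (w : 'rV[F]_n.+1) :
    (forall c, c \in C -> c *m A \in C) -> irreducible_poly g -> g %| mxminpoly A ->
    w \in C -> w != 0 -> w *m horner_mx A g = 0 ->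
  u *m horner_mx A (mxminpoly A %/ g) \in C.
Proof.
move=> stableC g_irr g_dvd wC w_neq0 wg0.
set m := mxminpoly A; set z := u *m horner_mx A (m %/ g).
have g_neq0 : g != 0 by rewrite -size_poly_gt0 ltnW ?g_irr.1.
have [P wP] := krylov_horner_surj w.
have [a Pa] : exists a, P = a * (m %/ g).
  apply/dvdpP; rewrite -(dvdp_mul2r _ _ g_neq0) divpK // -horner_krylov_eq0.
  by rewrite rmorphM /= -mulmxE mulmxA -wP wg0.
have g_coprime_a : coprimep g a.
  rewrite irreducible_poly_coprime //; apply: contra w_neq0 => /dvdpP [b a_eq].
  by rewrite wP Pa a_eq -mulrA [g * _]mulrC divpK // horner_krylov_eq0 dvdp_mull ?dvdpp.
have zg0 : z *m horner_mx A g = 0.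
  by apply/eqP; rewrite /z -mulmxA mulmxE -rmorphM divpK // horner_krylov_eq0 dvdpp.
have [y ->] := horner_mx_coprime g_coprime_a zg0.
rewrite /z -mulmxA mulmxE -rmorphM mulrA [_ * a]mulrC -Pa rmorphM -mulmxE mulmxA -wP.
exact: memv_mulmx_horner.
Qed.

Lemma stable_vspace_quotient (I : Type) (r : seq I) (g : I -> {poly F}) (mu : I -> nat)
    (C : {vspace 'rV[F]_n.+1}) :
    mxminpoly A = \prod_(i <- r) g i ^+ mu i ->
    (forall i, irreducible_poly (g i)) -> (forall i, g i %| mxminpoly A) ->
    C != 0%VS -> (forall c, c \in C -> c *m A \in C) ->
  exists i, u *m horner_mx A (mxminpoly A %/ g i) \in C.
Proof.
move=> mE g_irr g_dvd C_neq0 stableC.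
have c_neq0 : vpick C != 0 by rewrite vpick0.
have cm0 : vpick C *m horner_mx A (\prod_(i <- r) g i ^+ mu i) = 0.
  by rewrite -mE mx_root_minpoly mulmx0.
have [i [p cp_neq0 cpg0]] := horner_mx_prod_factor c_neq0 cm0.
exists i; apply: (stable_factor_quotient stableC (g_irr i) (g_dvd i) _ cp_neq0).
  exact: memv_mulmx_horner (memv_pick C).
by rewrite -mulmxA mulmxE -rmorphM.
Qed.

End CyclicVector.

Section ScalarExtension.
Variables (K : fieldType) (L : fieldExtType K).

Lemma rank_wt_gt0 n (c : 'rV[L]_n) : c != 0 -> (0 < rank_wt c)%N.
Proof.
move=> c_neq0; rewrite lt0n dimv_eq0; have [j cj_neq0] : exists j, c 0 j != 0.
  apply/existsP; apply: contraR c_neq0 => /existsPn c0.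
  by apply/eqP/rowP => j; rewrite mxE; apply/eqP/negPn.
apply: contraNneq cj_neq0 => span0; rewrite -memv0 -span0 memv_span //.
by apply: map_f; rewrite mem_enum.
Qed.

Lemma rank_wt_in_alg n (v : 'rV[K]_n) :
  v != 0 -> rank_wt (map_mx (in_alg L) v) = 1%N.
Proof.
move=> v_neq0; apply/eqP; rewrite eqn_leq rank_wt_gt0 ?map_mx_eq0 // andbT.
apply: (@leq_trans (\dim <[1 : L]>)); last by rewrite dim_vline oner_neq0.
apply/dimvS/span_subvP => _ /mapP [j _ ->].
by rewrite mxE in_algE memvZ ?memv_line.
Qed.

Lemma rank_wt_eq1 n (c : 'rV[L]_n) : rank_wt c = 1%N ->
  exists2 lam : L, lam != 0 & exists v : 'rV[K]_n, c = lam *: map_mx (in_alg L) v.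
Proof.
rewrite /rank_wt; set U := <<_>>%VS => dimU1.
have U_neq0 : U != 0%VS by rewrite -dimv_eq0 dimU1.
exists (vpick U); first by rewrite vpick0.
have U_line : U = <[vpick U]>%VS.
  apply/eqP; rewrite eq_sym eqEdim dim_vline vpick0 U_neq0 dimU1 leqnn andbT.
  by rewrite -memvE memv_pick.
have /fin_all_exists [k c_eq] j : exists k : K, c 0 j = k *: vpick U.
  by apply/vlineP; rewrite -U_line memv_span // map_f ?mem_enum.
by exists (\row_j k j); apply/rowP => j; rewrite !mxE c_eq in_algE mulr_algr.
Qed.

Lemma exists_scalar_neq0 (x : L) : x != 0 -> exists phi : {scalar L}, phi x != 0.
Proof.
move=> x_neq0; have [i coord_neq0] : exists i, coord (vbasis {:L}) i x != 0.
  apply/existsP; apply: contraR x_neq0 => /existsPn coord0.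
  rewrite (coord_vbasis (memvf x)) big1 // => i _.
  by have := coord0 i; rewrite negbK => /eqP->; rewrite scale0r.
by exists (coord (vbasis {:L}) i).
Qed.

Lemma map_scalar_horner_mx n (phi : {scalar L}) (A : 'M[K]_n.+1) (v : 'rV[K]_n.+1)
    (p : {poly L}) :
  map_mx phi (map_mx (in_alg L) v *m horner_mx (map_mx (in_alg L) A) p) =
  v *m horner_mx A (map_poly phi p).
Proof.
rewrite (horner_mx_coef_wide _ (leqnn _)) (horner_mx_coef_wide _ (size_poly _ _)).
apply/rowP => k; rewrite !mulmx_sumr !mxE !summxE linear_sum; apply: eq_bigr => i _.
rewrite -!scalemxAr -rmorphXn -map_mxM !mxE coef_map mulr_algr linearZ /=.
by rewrite mulrC.
Qed.

Lemma in_alg_factor_horner_eq0 n (A : 'M[K]_n.+1) (f : {poly K}) (q : {poly L})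
    (v : 'rV[K]_n.+1) :
    irreducible_poly f -> q %| map_poly (in_alg L) f -> (size q < size f)%N ->
    map_mx (in_alg L) v *m horner_mx (map_mx (in_alg L) A) q = 0 ->
  v = 0.
Proof.
move=> f_irr q_dvd q_lt vq0.
have q_neq0 : q != 0.
  by apply: contraTneq q_dvd => ->; rewrite dvd0p map_poly_eq0 -size_poly_gt0 ltnW ?f_irr.1.
have [phi phi_lead] : exists phi : {scalar L}, phi (lead_coef q) != 0.
  by apply: exists_scalar_neq0; rewrite lead_coef_eq0.
have size_r : size (map_poly phi q) = size q := size_map_poly_id0 phi_lead.
have vr0 : v *m horner_mx A (map_poly phi q) = 0.
  by rewrite -map_scalar_horner_mx vq0 map_mx0.
have vf0 : v *m horner_mx A f = 0.
  apply/eqP; rewrite -(map_mx_eq0 (in_alg L)) map_mxM map_horner_mx.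
  have [s ->] := dvdpP _ _ q_dvd.
  by rewrite mulrC rmorphM /= -mulmxE mulmxA vq0 mul0mx.
have f_coprime_r : coprimep f (map_poly phi q).
  have r_neq0 : map_poly phi q != 0 by rewrite -size_poly_gt0 size_r size_poly_gt0.
  rewrite irreducible_poly_coprime //; apply/negP => /(dvdp_leq r_neq0).
  by rewrite size_r leqNgt q_lt.
have [y ->] := horner_mx_coprime f_coprime_r vf0.
by rewrite rmorphM /= -mulmxE mulmxA vr0 mul0mx.
Qed.

End ScalarExtension.

Section CyclicCodes.
Variables (K : fieldType) (L : fieldExtType K) (n : nat).
Variables (A : 'M[K]_n.+1) (v : 'rV[K]_n.+1).
Hypothesis v_cyclic : krylov_mx v A \in unitmx.
Local Notation AL := (map_mx (in_alg L) A).
Local Notation uL := (map_mx (in_alg L) v).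

Lemma in_alg_krylov_unitmx : krylov_mx uL AL \in unitmx.
Proof. by rewrite -map_krylov_mx map_unitmx. Qed.

Lemma irreducible_in_alg_of_M1 (f : {poly K}) :
    (forall C : {vspace 'rV[L]_n.+1},
       C != 0%VS -> (forall c, c \in C -> c *m AL \in C) -> M1_eq C 1) ->
    irreducible_poly f -> f %| mxminpoly A ->
  irreducible_poly (map_poly (in_alg L) f).
Proof.
move=> M1_C f_irr f_dvd; set g := map_poly _ f.
have f_neq0 : f != 0 by rewrite -size_poly_gt0 ltnW ?f_irr.1.
have g_dvd : g %| mxminpoly AL by rewrite mxminpoly_map dvdp_map.
split=> [|q q_size q_dvd]; first by rewrite size_map_poly; exact: f_irr.1.
apply/negPn/negP => q_neqp.
have q_neq0 : q != 0 by apply: contraTneq q_dvd => ->; rewrite dvd0p map_poly_eq0.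
have q_gt1 : (1 < size q)%N.
  by move: q_size q_neq0; rewrite -size_poly_eq0; case: (size q) => [|[|]].
have q_lt : (size q < size f)%N.
  rewrite -(size_map_poly (in_alg L)) ltn_neqAle dvdp_size_eqp // q_neqp.
  by rewrite dvdp_leq ?map_poly_eq0.
pose C := horner_ker AL q.
have C_neq0 : C != 0%VS.
  have := horner_krylov_divp_neq0 in_alg_krylov_unitmx (dvdp_trans q_dvd g_dvd) q_gt1.
  apply: contraNneq => C0; rewrite -memv0 -C0 mem_horner_ker -mulmxA mulmxE -rmorphM.
  by rewrite divpK ?horner_krylov_eq0 ?(dvdp_trans q_dvd g_dvd) ?in_alg_krylov_unitmx.
have [[c /andP [cC c_neq0] c_wt] _] := M1_C C C_neq0 (@horner_ker_stable _ _ AL q).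
have [lam lam_neq0 [w c_eq]] := rank_wt_eq1 c_wt.
have w_neq0 : w != 0 by apply: contraNneq c_neq0 => w0; rewrite c_eq w0 map_mx0 scaler0.
apply: (negP w_neq0); apply/eqP/(in_alg_factor_horner_eq0 (A := A) f_irr q_dvd q_lt).
by move: cC; rewrite mem_horner_ker c_eq -scalemxAl scaler_eq0 (negbTE lam_neq0) => /eqP.
Qed.

Lemma M1_of_irreducible_in_alg (I : Type) (r : seq I) (f : I -> {poly K}) (mu : I -> nat)
    (C : {vspace 'rV[L]_n.+1}) :
    mxminpoly A = \prod_(i <- r) f i ^+ mu i -> (forall i, f i %| mxminpoly A) ->
    (forall i, irreducible_poly (map_poly (in_alg L) (f i))) ->
    C != 0%VS -> (forall c, c \in C -> c *m AL \in C) ->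
  M1_eq C 1.
Proof.
move=> mE f_dvd g_irr C_neq0 stableC; split; last by move=> c _; apply: rank_wt_gt0.
have mLE : mxminpoly AL = \prod_(i <- r) map_poly (in_alg L) (f i) ^+ mu i.
  by rewrite mxminpoly_map mE rmorph_prod; apply: eq_bigr => i _; rewrite rmorphXn.
have g_dvd i : map_poly (in_alg L) (f i) %| mxminpoly AL.
  by rewrite mxminpoly_map dvdp_map.
have [i zC] := stable_vspace_quotient in_alg_krylov_unitmx mLE g_irr g_dvd C_neq0 stableC.
have z_neq0 := horner_krylov_divp_neq0 in_alg_krylov_unitmx (g_dvd i) (g_irr i).1.
have z_eq : uL *m horner_mx AL (mxminpoly AL %/ map_poly (in_alg L) (f i)) =
            map_mx (in_alg L) (v *m horner_mx A (mxminpoly A %/ f i)).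
  by rewrite map_mxM map_horner_mx map_divp mxminpoly_map.
exists (uL *m horner_mx AL (mxminpoly AL %/ map_poly (in_alg L) (f i))).
  by rewrite zC.
by rewrite z_eq rank_wt_in_alg // -(map_mx_eq0 (in_alg L)) -z_eq.
Qed.

End CyclicCodes.

Theorem corollary4 (K : fieldType) (L : fieldExtType K) (n : nat)
    (M : 'M[K]_n.+1) (s : nat) (f : 'I_s -> {poly K}) (mu : 'I_s -> nat) :
  (n.+1 <= \dim {:L})%N ->
  cyclic_mx M ->
  (forall i, f i \is monic) ->
  (forall i, irreducible_poly (f i)) ->
  injective f ->
  (forall i, (1 <= mu i)%N) ->
  mxminpoly M = \prod_(i < s) f i ^+ mu i ->
  (forall C : {vspace 'rV[L]_n.+1},
      C != 0%VS -> mx_invariant_code M C -> M1_eq C 1) <->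
  (forall i, irreducible_poly (map_poly (in_alg L) (f i))).
Proof.
move=> _ [v v_cyclic] _ f_irr _ mu_gt0 mE.
rewrite -mxminpoly_trmx in mE.
have f_dvd i : f i %| mxminpoly M^T.
  by rewrite mE (bigD1 i) //= dvdp_mulr // dvdp_exp ?dvdpp ?mu_gt0.
split=> [M1_C i | g_irr C C_neq0 stableC].
  by apply: (irreducible_in_alg_of_M1 v_cyclic _ (f_irr i) (f_dvd i)); apply: M1_C.
by apply: (M1_of_irreducible_in_alg v_cyclic mE f_dvd g_irr C_neq0).
Qed.
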